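(* Let $E\in M_n(\mathbb{FT})$ be idempotent ($E\otimes E=E$), let $H_E$ be the $\mathcal{H}$-class of $E$ in $M_n(\mathbb{FT})$, and let $\mathrm{Aut}(C(E))$ be the group of $\mathbb{FT}$-module automorphisms of $C(E)$. Let $E_1,\dots,E_n$ denote the columns of $E$. Define $\psi:\mathrm{Aut}(C(E))\to H_E$ by $\psi(f)=(f(E_1)\ \cdots\ f(E_n))$, the matrix whose $i$th column is $f(E_i)$. Then $\psi$ is a well-defined isomorphism of groups (where $H_E$ is a group under tropical matrix multiplication). Dually, $H_E$ is isomorphic to the group of $\mathbb{FT}$-module automorphisms of $R(E)$.
   Context: $\mathbb{FT}$ is $\mathbb{R}$ with $a\oplus b=\max(a,b)$, $a\otimes b=a+b$. $M_n(\mathbb{FT})$ is the semigroup of real $n\times n$ matrices under $(A\otimes B)_{i,j}=\max_k(A_{i,k}+B_{k,j})$. $\mathbb{FT}^n$ is an $\mathbb{FT}$-module under componentwise maximum and scaling $(\lambda\otimes x)_i=\lambda+x_i$; an $\mathbb{FT}$-module automorphism is a bijection preserving $\oplus$ and scaling. $C(A)$ (resp. $R(A)$) is the submodule of $\mathbb{FT}^n$ generated by the columns (resp. rows) of $A$, i.e. the set of all finite $\oplus$-combinations of scalings of them. Green's relations on a semigroup $S$ (with $S^1$ being $S$ with an identity adjoined): $a\,\mathcal{R}\,b$ iff $aS^1=bS^1$, $a\,\mathcal{L}\,b$ iff $S^1a=S^1b$, and $\mathcal{H}=\mathcal{L}\cap\mathcal{R}$. The $\mathcal H$-class of an idempotent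 is a group. *)

From HB Require Import structures.
From mathcomp Require Import all_boot all_order all_algebra.
From mathcomp Require Import reals.
Set Implicit Arguments. Unset Strict Implicit. Unset Printing Implicit Defensive.
Import Order.TTheory GRing.Theory Num.Theory.
Local Open Scope ring_scope.

(* Tropical (max-plus) semiring FT = R (a realType), a (+) b = max a b, a (x) b = a + b. *)

(* Maximum of a sequence; only meaningful (and only used) for nonempty sequences. *)
Definition maxs (R : realType) (s : seq R) : R := foldr Num.max (head 0 s) s.

Definition tmul (R : realType) (n : nat) (A B : 'M[R]_n) : 'M[R]_n :=
  \matrix_(i, j) maxs [seq A i k + B k j | k <- enum 'I_n].

Definition tmax (R : realType) (a b : nat) (x y : 'M[R]_(a, b)) : 'M[R]_(a, b) :=
  map2_mx Num.max x y.
Definition tscale (R : realType) (a b : nat) (l : R) (x : 'M[R]_(a, b)) : 'M[R]_(a, b) :=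
  map_mx (fun t => l + t) x.

Definition colspace (R : realType) (n : nat) (A : 'M[R]_n) (x : 'cV[R]_n) : Prop :=
  exists (S : {set 'I_n}) (lam : 'I_n -> R),
    S != set0 /\ x = \col_i maxs [seq lam k + A i k | k <- enum S].

Definition rowspace (R : realType) (n : nat) (A : 'M[R]_n) (x : 'rV[R]_n) : Prop :=
  exists (S : {set 'I_n}) (lam : 'I_n -> R),
    S != set0 /\ x = \row_j maxs [seq lam k + A k j | k <- enum S].

(* f is an FT-module automorphism of the submodule M (f is considered only on M). *)
Definition is_aut (R : realType) (a b : nat) (M : 'M[R]_(a, b) -> Prop)
    (f : 'M[R]_(a, b) -> 'M[R]_(a, b)) : Prop :=
  [/\ (forall x, M x -> M (f x)),
      (forall x y, M x -> M y -> f x = f y -> x = y),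
      (forall y, M y -> exists x, M x /\ f x = y),
      (forall x y, M x -> M y -> f (tmax x y) = tmax (f x) (f y)) &
      (forall l x, M x -> f (tscale l x) = tscale l (f x))].

(* Green's relations in the monoid S^1 where S = M_n(FT). *)
Definition in_right_ideal (R : realType) (n : nat) (A B : 'M[R]_n) : Prop :=
  A = B \/ exists X, A = tmul B X.
Definition in_left_ideal (R : realType) (n : nat) (A B : 'M[R]_n) : Prop :=
  A = B \/ exists X, A = tmul X B.
Definition Rrel (R : realType) (n : nat) (A B : 'M[R]_n) : Prop :=
  in_right_ideal A B /\ in_right_ideal B A.
Definition Lrel (R : realType) (n : nat) (A B : 'M[R]_n) : Prop :=
  in_left_ideal A B /\ in_left_ideal B A.
Definition Hrel (R : realType) (n : nat) (A B : 'M[R]_n) : Prop :=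
  Rrel A B /\ Lrel A B.

Definition psi (R : realType) (n : nat) (E : 'M[R]_n) (f : 'cV[R]_n -> 'cV[R]_n) : 'M[R]_n :=
  \matrix_(i, j) f (col j E) i 0.

From mathcomp Require Import all_boot all_order all_algebra.
From mathcomp Require Import reals.
From Stdlib Require Import ClassicalEpsilon.
Set Implicit Arguments. Unset Strict Implicit. Unset Printing Implicit Defensive.
Import Order.TTheory GRing.Theory Num.Theory.
Local Open Scope ring_scope.

(* Since E is idempotent, C(E) = {x | E x = x}, and every such x is the
   combination of the columns of E with coefficients x. Hence an automorphism f
   of C(E) acts on C(E) as left multiplication by psi(f), which makes psi
   multiplicative and injective; psi(f) lies in H_E because the matrix of
   preimages of the columns of E is its inverse. Conversely every H in H_E acts
   on C(E) by left multiplication as an automorphism with psi = H.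
   Transposition turns R(E) into C(E^T) but reverses products, so on the row
   side psi has to be followed by inversion in the group H_E. *)

Section Maxs.
Variable R : realType.

Lemma le_maxs (s : seq R) x : x \in s -> x <= maxs s.
Proof.
rewrite /maxs; elim: s (head 0 s) => // a s IH c.
by rewrite inE /= le_max => /predU1P[->|/IH ->]; rewrite ?lexx ?orbT.
Qed.

Lemma maxs_mem (s : seq R) : s != [::] -> maxs s \in s.
Proof.
case: s => // a s _; rewrite /maxs /=.
suff: foldr Num.max a (a :: s) \in a :: a :: s by rewrite !inE orbA orbb.
elim: (a :: s) => [|b r IH] /=; first exact: mem_head.
rewrite !inE; case: (leP b (foldr Num.max a r)) => _; last by rewrite eqxx orbT.
by move: IH; rewrite !inE => /orP[->|->]; rewrite ?orbT.
Qed.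

Variable T : eqType.
Implicit Types (F G : T -> R) (s : seq T).

Lemma le_maxs_map F s k : k \in s -> F k <= maxs (map F s).
Proof. by move=> ks; apply/le_maxs/map_f. Qed.

Lemma maxs_attained F s : s != [::] -> exists2 k, k \in s & maxs (map F s) = F k.
Proof.
move=> s_n0; have /mapP[k ks ->] : maxs (map F s) \in map F s.
  by apply: maxs_mem; case: s s_n0.
by exists k.
Qed.

Lemma maxs_le F s m : s != [::] -> (forall k, k \in s -> F k <= m) ->
  maxs (map F s) <= m.
Proof. by move=> /(maxs_attained F)[k ks ->]; apply. Qed.

Lemma eq_maxs F G s s' : s != [::] -> s =i s' -> {in s, F =1 G} ->
  maxs (map F s) = maxs (map G s').
Proof.
move=> s_n0 ss' FG; have s'_n0 : s' != [::].
  by case: s s_n0 ss' {FG} => // a s _ /(_ a); rewrite mem_head; case: s'.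
apply: le_anti; apply/andP; split; apply: maxs_le => // k ks.
  by rewrite FG //; apply: le_maxs_map; rewrite -ss'.
by rewrite -FG ?ss' //; apply: le_maxs_map; rewrite ss'.
Qed.

Lemma maxs_addl F s c : s != [::] ->
  maxs [seq c + F k | k <- s] = c + maxs (map F s).
Proof.
move=> s_n0; apply: le_anti; rewrite maxs_le //=; last first.
  by move=> k ks; rewrite lerD2l le_maxs_map.
have [k ks ->] := maxs_attained F s_n0.
exact: (le_maxs_map (fun k => c + F k) ks).
Qed.

Lemma maxs_addr F s c : s != [::] ->
  maxs [seq F k + c | k <- s] = maxs (map F s) + c.
Proof.
move=> s_n0; rewrite addrC -maxs_addl //.
by congr maxs; apply: eq_map => k; rewrite addrC.
Qed.

Lemma maxs_max F G s : s != [::] ->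
  maxs [seq Num.max (F k) (G k) | k <- s] = Num.max (maxs (map F s)) (maxs (map G s)).
Proof.
move=> s_n0; apply: le_anti; rewrite maxs_le //=; last first.
  by move=> k ks; rewrite ge_max !le_max !le_maxs_map ?orbT.
rewrite ge_max; apply/andP; split; apply: maxs_le => // k ks;
  apply: le_trans (le_maxs_map (fun k => Num.max (F k) (G k)) ks);
  by rewrite le_max lexx ?orbT.
Qed.

Lemma maxs_cons (a : R) (r : seq R) : r != [::] -> maxs (a :: r) = Num.max a (maxs r).
Proof.
move=> r_n0; apply: le_anti; apply/andP; split.
  have := maxs_mem (isT : a :: r != [::]); rewrite inE => /predU1P[->|ar].
    by rewrite le_max lexx.
  by rewrite le_max le_maxs ?orbT.
by rewrite ge_max !le_maxs ?mem_head // inE maxs_mem ?orbT.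
Qed.

End Maxs.

Lemma maxs_exchange (R : realType) (U V : eqType) (F : U -> V -> R) s t :
  s != [::] -> t != [::] ->
  maxs [seq maxs [seq F a b | b <- t] | a <- s] =
  maxs [seq maxs [seq F a b | a <- s] | b <- t].
Proof.
have le_exchange (U' V' : eqType) s' t' (G : U' -> V' -> R) : s' != [::] -> t' != [::] ->
    maxs [seq maxs [seq G a b | b <- t'] | a <- s'] <=
    maxs [seq maxs [seq G a b | a <- s'] | b <- t'].
  move=> s'_n0 t'_n0; apply: maxs_le => // a as'; apply: maxs_le => // b bt'.
  apply: le_trans (le_maxs_map (fun b => maxs [seq G a b | a <- s']) bt').
  exact: (le_maxs_map (G ^~ b)).
move=> s_n0 t_n0; apply: le_anti; apply/andP; split; first exact: le_exchange.
exact: (le_exchange _ _ t s (fun b a => F a b)).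
Qed.

Section TropicalProduct.
Variable R : realType.

Definition tcomb m p q (A : 'M[R]_(m, p)) (y : 'M[R]_(p, q)) (s : seq 'I_p) : 'M[R]_(m, q) :=
  \matrix_(i, j) maxs [seq A i k + y k j | k <- s].

Definition tmulmx m p q (A : 'M[R]_(m, p)) (B : 'M[R]_(p, q)) : 'M[R]_(m, q) :=
  tcomb A B (enum 'I_p).

Lemma enum_ord_neq0 p : (0 < p)%N -> enum 'I_p != [::].
Proof. by move=> p_gt0; rewrite -size_eq0 size_enum_ord -lt0n. Qed.

Lemma tmulmx_comb m p q r (A : 'M[R]_(m, p)) (B : 'M[R]_(p, q)) (y : 'M[R]_(q, r)) s :
  (0 < p)%N -> s != [::] -> tmulmx A (tcomb B y s) = tcomb (tmulmx A B) y s.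
Proof.
move=> p_gt0 s_n0; apply/matrixP => i j; rewrite !mxE.
transitivity (maxs [seq maxs [seq A i l + B l k + y k j | k <- s] | l <- enum 'I_p]).
  congr maxs; apply: eq_map => l; rewrite mxE -maxs_addl //.
  by congr maxs; apply: eq_map => k; rewrite addrA.
rewrite maxs_exchange ?enum_ord_neq0 //; congr maxs; apply: eq_map => k.
by rewrite mxE -maxs_addr ?enum_ord_neq0.
Qed.

Lemma tmulmxA m p q r (A : 'M[R]_(m, p)) (B : 'M[R]_(p, q)) (C : 'M[R]_(q, r)) :
  (0 < p)%N -> (0 < q)%N -> tmulmx A (tmulmx B C) = tmulmx (tmulmx A B) C.
Proof. by move=> p_gt0 q_gt0; rewrite [tmulmx B C]/tmulmx tmulmx_comb ?enum_ord_neq0. Qed.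

Lemma tmulmx_tr m p q (A : 'M[R]_(m, p)) (B : 'M[R]_(p, q)) :
  (tmulmx A B)^T = tmulmx B^T A^T.
Proof.
by apply/matrixP => i j; rewrite !mxE; congr maxs; apply: eq_map => k; rewrite !mxE addrC.
Qed.

Lemma col_tmulmx m p q (A : 'M[R]_(m, p)) (B : 'M[R]_(p, q)) j :
  col j (tmulmx A B) = tmulmx A (col j B).
Proof.
by apply/matrixP => i k; rewrite !mxE; congr maxs; apply: eq_map => l; rewrite !mxE.
Qed.

Lemma row_tmulmx m p q (A : 'M[R]_(m, p)) (B : 'M[R]_(p, q)) i :
  row i (tmulmx A B) = tmulmx (row i A) B.
Proof.
by apply/matrixP => k j; rewrite !mxE; congr maxs; apply: eq_map => l; rewrite !mxE.
Qed.

Lemma tmulmx_tmax m p q (A : 'M[R]_(m, p)) (x y : 'M[R]_(p, q)) : (0 < p)%N ->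
  tmulmx A (tmax x y) = tmax (tmulmx A x) (tmulmx A y).
Proof.
move=> p_gt0; apply/matrixP => i j; rewrite !mxE -maxs_max ?enum_ord_neq0 //.
by congr maxs; apply: eq_map => k; rewrite !mxE addr_maxr.
Qed.

Lemma tmulmx_tscale m p q (A : 'M[R]_(m, p)) (x : 'M[R]_(p, q)) l : (0 < p)%N ->
  tmulmx A (tscale l x) = tscale l (tmulmx A x).
Proof.
move=> p_gt0; apply/matrixP => i j; rewrite !mxE -maxs_addl ?enum_ord_neq0 //.
by congr maxs; apply: eq_map => k; rewrite !mxE addrCA.
Qed.

Lemma tmax_tr m p (x y : 'M[R]_(m, p)) : (tmax x y)^T = tmax x^T y^T.
Proof. by apply/matrixP => i j; rewrite !mxE. Qed.

Lemma tscale_tr m p l (x : 'M[R]_(m, p)) : (tscale l x)^T = tscale l x^T.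
Proof. by apply/matrixP => i j; rewrite !mxE. Qed.

Lemma tcomb1 m p (A : 'M[R]_(m, p)) (y : 'cV[R]_p) k :
  tcomb A y [:: k] = tscale (y k 0) (col k A).
Proof. by apply/matrixP => i j; rewrite !mxE (ord1 j) /maxs /= maxxx addrC. Qed.

Lemma tcomb_cons m p (A : 'M[R]_(m, p)) (y : 'cV[R]_p) k s : s != [::] ->
  tcomb A y (k :: s) = tmax (tscale (y k 0) (col k A)) (tcomb A y s).
Proof.
move=> s_n0; apply/matrixP => i j.
by rewrite !mxE (ord1 j) /= maxs_cons 1?addrC //; case: s s_n0.
Qed.

End TropicalProduct.

Lemma col_matrixP (R : Type) m n (A B : 'M[R]_(m, n)) :
  (forall j, col j A = col j B) <-> A = B.
Proof.
split=> [eqAB | -> //]; apply: trmx_inj; apply/row_matrixP => j.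
by rewrite -!tr_col eqAB.
Qed.

Lemma colspace_tcomb (R : realType) n (A : 'M[R]_n) x :
  colspace A x <-> exists s (y : 'cV[R]_n), s != [::] /\ x = tcomb A y s.
Proof.
split=> [[S [lam [S_n0 ->]]] | [s [y [s_n0 ->]]]].
  exists (enum S), (\col_k lam k); split.
    by case/set0Pn: S_n0 => k kS; apply/eqP => S0; move: kS; rewrite -mem_enum S0.
  by apply/matrixP => i j; rewrite !mxE; congr maxs; apply: eq_map => k; rewrite !mxE addrC.
exists [set k in s], (fun k => y k 0); split.
  by case: s s_n0 => // k s _; apply/set0Pn; exists k; rewrite inE mem_head.
apply/matrixP => i j; rewrite !mxE (ord1 j); apply: eq_maxs => // [k|k _].
  by rewrite mem_enum inE.
by rewrite addrC.
Qed.

Section Idempotent.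
Variables (R : realType) (n : nat) (E : 'M[R]_n).
Hypotheses (n_gt0 : (0 < n)%N) (E_idem : tmul E E = E).

Let EE : tmulmx E E = E := E_idem.

Let mulA (A B : 'M[R]_n) m (C : 'M[R]_(n, m)) :
  tmulmx A (tmulmx B C) = tmulmx (tmulmx A B) C.
Proof. exact: tmulmxA. Qed.

Lemma colspaceP x : colspace E x <-> tmulmx E x = x.
Proof.
split=> [/colspace_tcomb[s [y [s_n0 ->]]] | Ex]; first by rewrite tmulmx_comb // EE.
apply/colspace_tcomb; exists (enum 'I_n), x; split; first exact: enum_ord_neq0.
by rewrite -[LHS]Ex.
Qed.

Lemma col_colspace j : colspace E (col j E).
Proof. by apply/colspaceP; rewrite -col_tmulmx EE. Qed.

Lemma col_psi f j : col j (psi E f) = f (col j E).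
Proof. by apply/matrixP => i k; rewrite !mxE (ord1 k). Qed.

Lemma aut_tcomb f y s : is_aut (colspace E) f -> s != [::] ->
  f (tcomb E y s) = tcomb (psi E f) y s.
Proof.
case=> _ _ _ f_max f_scale; elim: s => // k s IH _.
have tcomb_in r : r != [::] -> colspace E (tcomb E y r).
  by move=> r_n0; apply/colspace_tcomb; exists r, y.
have scale_col : f (tscale (y k 0) (col k E)) = tscale (y k 0) (col k (psi E f)).
  by rewrite f_scale ?col_psi //; apply: col_colspace.
have [-> | s_n0] := eqVneq s [::]; first by rewrite !tcomb1.
have k_in : colspace E (tscale (y k 0) (col k E)) by rewrite -tcomb1; apply: tcomb_in.
by rewrite !tcomb_cons // (f_max _ _ k_in (tcomb_in _ s_n0)) scale_col IH.
Qed.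

Lemma aut_tmulmx f x : is_aut (colspace E) f -> colspace E x ->
  f x = tmulmx (psi E f) x.
Proof.
by move=> f_aut /colspaceP Ex; rewrite -{1}Ex; exact: aut_tcomb (enum_ord_neq0 n_gt0).
Qed.

Lemma HrelP H : Hrel H E <->
  [/\ exists X, H = tmulmx E X, exists Y, E = tmulmx H Y,
      exists X, H = tmulmx X E & exists Y, E = tmulmx Y H].
Proof.
split=> [[[HE EH] [HE' EH']] | [[X HX] [Y EY] [X' HX'] [Y' EY']]].
  split.
  - by case: HE => [->|[X ->]]; [exists E; rewrite EE | exists X].
  - by case: EH => [<-|[Y ->]]; [exists E; rewrite EE | exists Y].
  - by case: HE' => [->|[X ->]]; [exists E; rewrite EE | exists X].
  - by case: EH' => [<-|[Y ->]]; [exists E; rewrite EE | exists Y].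
by split; split; right; [exists X | exists Y | exists X' | exists Y'].
Qed.

Lemma Hrel_mulE H : Hrel H E -> tmulmx H E = H.
Proof. by case/HrelP=> _ _ [X ->] _; rewrite -mulA EE. Qed.

Lemma Hrel_Emul H : Hrel H E -> tmulmx E H = H.
Proof. by case/HrelP=> [[X ->]] _ _ _; rewrite mulA EE. Qed.

Lemma psi_Hrel f : is_aut (colspace E) f -> Hrel (psi E f) E.
Proof.
move=> f_aut; have [f_in f_inj f_surj _ _] := f_aut; set F := psi E f.
have [g g_spec] := fin_all_exists (fun j => f_surj _ (col_colspace j)).
pose G := \matrix_(i, j) g j i 0.
have col_G j : col j G = g j by apply/matrixP => i k; rewrite !mxE (ord1 k).
have EF : tmulmx E F = F.
  apply/col_matrixP => j; rewrite col_tmulmx col_psi; apply/colspaceP.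
  exact/f_in/col_colspace.
have FE : tmulmx F E = F.
  apply/col_matrixP => j; rewrite col_tmulmx col_psi -aut_tmulmx //.
  exact: col_colspace.
have FG : tmulmx F G = E.
  apply/col_matrixP => j; rewrite col_tmulmx col_G -aut_tmulmx; by case: (g_spec j).
have EG : tmulmx E G = G.
  by apply/col_matrixP => k; rewrite col_tmulmx col_G; apply/colspaceP; case: (g_spec k).
have GF : tmulmx G F = E.
  apply/col_matrixP => j; rewrite col_tmulmx.
  have GFj_in : colspace E (tmulmx G (col j F)) by apply/colspaceP; rewrite mulA EG.
  apply: f_inj => //; first exact: col_colspace.
  by rewrite (aut_tmulmx f_aut GFj_in) mulA FG -col_tmulmx EF col_psi.
by apply/HrelP; split; [exists F | exists G | exists F | exists G].
Qed.

Lemma psi_comp f g : is_aut (colspace E) f -> is_aut (colspace E) g ->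
  psi E (f \o g) = tmul (psi E f) (psi E g).
Proof.
move=> f_aut [g_in _ _ _ _]; apply/col_matrixP => j.
by rewrite col_psi col_tmulmx col_psi /= (aut_tmulmx f_aut) //; apply/g_in/col_colspace.
Qed.

Lemma psi_inj f g : is_aut (colspace E) f -> is_aut (colspace E) g ->
  psi E f = psi E g -> forall x, colspace E x -> f x = g x.
Proof.
move=> f_aut g_aut psi_fg x x_in.
by rewrite (aut_tmulmx f_aut) ?(aut_tmulmx g_aut) ?psi_fg.
Qed.

Lemma psi_surj H : Hrel H E -> exists f, is_aut (colspace E) f /\ psi E f = H.
Proof.
move=> H_E; have HE := Hrel_mulE H_E; have EH := Hrel_Emul H_E.
have [_ [Y EY] _ [Y' EY']] := (HrelP H).1 H_E.
exists (tmulmx H); split; last first.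
  by apply/col_matrixP => j; rewrite col_psi -col_tmulmx HE.
split.
- by move=> x _; apply/colspaceP; rewrite mulA EH.
- move=> x y /colspaceP Ex /colspaceP Ey Hxy.
  by rewrite -Ex -Ey EY' -!mulA Hxy.
- move=> y /colspaceP Ey; exists (tmulmx E (tmulmx Y y)); split.
    by apply/colspaceP; rewrite mulA EE.
  by rewrite mulA HE mulA -EY.
- by move=> x y _ _; apply: tmulmx_tmax.
- by move=> l x _; apply: tmulmx_tscale.
Qed.

Lemma Hrel_inverse H : Hrel H E ->
  exists K, [/\ Hrel K E, tmulmx K H = E & tmulmx H K = E].
Proof.
move=> H_E; have HE := Hrel_mulE H_E.
have [_ [Y EY] _ [Y' EY']] := (HrelP H).1 H_E.
pose K := tmulmx (tmulmx E Y) E.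
have HK : tmulmx H K = E by rewrite !mulA HE -EY EE.
have KH : tmulmx K H = E.
  rewrite -mulA (Hrel_Emul H_E) -mulA {1}EY' -mulA [tmulmx H (tmulmx Y H)]mulA -EY.
  by rewrite (Hrel_Emul H_E) -EY'.
exists K; split=> //; apply/HrelP; split; [|by exists H|by exists (tmulmx E Y)|by exists H].
by exists (tmulmx Y E); rewrite mulA.
Qed.

(* Junk unless A lies in H_E. *)
Definition Hinv (A : 'M[R]_n) : 'M[R]_n :=
  epsilon (inhabits 0) (fun K => [/\ Hrel K E, tmulmx K A = E & tmulmx A K = E]).

Lemma HinvP H : Hrel H E ->
  [/\ Hrel (Hinv H) E, tmulmx (Hinv H) H = E & tmulmx H (Hinv H) = E].
Proof. by move/Hrel_inverse; apply: epsilon_spec. Qed.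

Lemma inverse_uniq (K K' A : 'M[R]_n) : tmulmx K E = K -> tmulmx E K' = K' ->
  tmulmx K A = E -> tmulmx A K' = E -> K = K'.
Proof. by move=> KE EK' KA AK'; rewrite -KE -AK' mulA KA EK'. Qed.

Lemma mul_linv (K K' A B : 'M[R]_n) : tmulmx K A = E -> tmulmx K' B = E -> tmulmx E B = B ->
  tmulmx (tmulmx K' K) (tmulmx A B) = E.
Proof. by move=> KA K'B EB; rewrite -mulA [tmulmx K _]mulA KA EB. Qed.

Lemma mul_rinv (K K' A B : 'M[R]_n) : tmulmx A K = E -> tmulmx B K' = E -> tmulmx E K = K ->
  tmulmx (tmulmx A B) (tmulmx K' K) = E.
Proof. by move=> AK BK' EK; rewrite -mulA [tmulmx B _]mulA BK' EK. Qed.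

Lemma Hrel_mul A B : Hrel A E -> Hrel B E -> Hrel (tmulmx A B) E.
Proof.
move=> A_E B_E; have [Ai_E AiA AAi] := HinvP A_E; have [_ BiB BBi] := HinvP B_E.
apply/HrelP; split.
- by exists (tmulmx A B); rewrite mulA Hrel_Emul.
- by exists (tmulmx (Hinv B) (Hinv A)); rewrite mul_rinv // Hrel_Emul.
- by exists (tmulmx A B); rewrite -mulA Hrel_mulE.
- by exists (tmulmx (Hinv B) (Hinv A)); rewrite mul_linv // Hrel_Emul.
Qed.

Lemma Hinv_mul A B : Hrel A E -> Hrel B E ->
  Hinv (tmulmx A B) = tmulmx (Hinv B) (Hinv A).
Proof.
move=> A_E B_E; have [AB_E ABi_AB _] := HinvP (Hrel_mul A_E B_E).
have [Ai_E _ AAi] := HinvP A_E; have [Bi_E _ BBi] := HinvP B_E.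
apply: (inverse_uniq (A := tmulmx A B)) => //.
- exact: Hrel_mulE.
- by rewrite mulA Hrel_Emul.
- by rewrite mul_rinv // Hrel_Emul.
Qed.

Lemma HinvK A : Hrel A E -> Hinv (Hinv A) = A.
Proof.
move=> A_E; have [Ai_E AiA _] := HinvP A_E; have [Aii_E AiiAi _] := HinvP Ai_E.
by apply: (inverse_uniq (A := Hinv A)) => //; [apply: Hrel_mulE | apply: Hrel_Emul].
Qed.

End Idempotent.

Section Transpose.
Variable R : realType.

Definition trconj a b (f : 'M[R]_(b, a) -> 'M[R]_(b, a)) (x : 'M[R]_(a, b)) : 'M[R]_(a, b) :=
  (f x^T)^T.

Lemma aut_trconj a b (M : 'M[R]_(a, b) -> Prop) (N : 'M[R]_(b, a) -> Prop) f :
  (forall x, M x <-> N x^T) -> is_aut N f -> is_aut M (trconj f).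
Proof.
move=> MN [f_in f_inj f_surj f_max f_scale]; split; rewrite /trconj.
- by move=> x /MN /f_in; rewrite MN trmxK.
- by move=> x y /MN Nx /MN Ny /trmx_inj fxy; apply: trmx_inj; apply: f_inj fxy.
- move=> y /MN /f_surj[x [Nx fx]]; exists x^T.
  by rewrite MN trmxK fx trmxK.
- by move=> x y /MN Nx /MN Ny; rewrite tmax_tr f_max // tmax_tr.
- by move=> l x /MN Nx; rewrite tscale_tr f_scale // tscale_tr.
Qed.

Lemma Hrel_tr n (A B : 'M[R]_n) : Hrel A B -> Hrel A^T B^T.
Proof.
have ideal_tr (C D : 'M[R]_n) : C = D \/ (exists X, C = tmul D X) ->
    C^T = D^T \/ exists X, C^T = tmul X D^T.
  by case=> [-> | [X ->]]; [left | right; exists X^T; rewrite [LHS]tmulmx_tr].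
have ideal_tr' (C D : 'M[R]_n) : C = D \/ (exists X, C = tmul X D) ->
    C^T = D^T \/ exists X, C^T = tmul D^T X.
  by case=> [-> | [X ->]]; [left | right; exists X^T; rewrite [LHS]tmulmx_tr].
case=> [[AB BA] [AB' BA']]; split; split.
- exact: ideal_tr'.
- exact: ideal_tr'.
- exact: ideal_tr.
- exact: ideal_tr.
Qed.

Lemma rowspace_tr n (E : 'M[R]_n) x : rowspace E x <-> colspace E^T x^T.
Proof.
split=> [] [S [lam [S_n0 x_eq]]]; exists S, lam; split=> //; apply: trmx_inj;
  rewrite ?trmxK x_eq; apply/matrixP => i j; rewrite !mxE; congr maxs;
  by apply: eq_map => k; rewrite mxE.
Qed.

End Transpose.

Section RowSpace.
Variables (R : realType) (n : nat) (E : 'M[R]_n).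
Hypotheses (n_gt0 : (0 < n)%N) (E_idem : tmul E E = E).

Let ET_idem : tmul E^T E^T = E^T.
Proof. by rewrite -[LHS]/(tmulmx E^T E^T) -tmulmx_tr; congr trmx; exact: E_idem. Qed.

Definition psi_row (f : 'rV[R]_n -> 'rV[R]_n) : 'M[R]_n := \matrix_(i, j) f (row i E) 0 j.

Lemma row_psi_row f i : row i (psi_row f) = f (row i E).
Proof. by apply/matrixP => k j; rewrite !mxE (ord1 k). Qed.

Lemma row_rowspace i : rowspace E (row i E).
Proof. by apply/rowspace_tr; rewrite tr_row; apply: col_colspace. Qed.

Lemma aut_row_trconj f : is_aut (rowspace E) f -> is_aut (colspace E^T) (trconj f).
Proof. by apply: aut_trconj => x; rewrite rowspace_tr trmxK. Qed.

Lemma psi_row_tr f : psi_row f = (psi E^T (trconj f))^T.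
Proof. by apply/matrixP => i j; rewrite !mxE -tr_row trmxK. Qed.

Lemma aut_row_tmulmx f x : is_aut (rowspace E) f -> rowspace E x ->
  f x = tmulmx x (psi_row f).
Proof.
move=> f_aut /rowspace_tr xT_in.
have := aut_tmulmx n_gt0 ET_idem (aut_row_trconj f_aut) xT_in.
by rewrite /trconj trmxK psi_row_tr => /(congr1 trmx); rewrite trmxK tmulmx_tr trmxK.
Qed.

Lemma psi_row_comp f g : is_aut (rowspace E) f -> is_aut (rowspace E) g ->
  psi_row (f \o g) = tmul (psi_row g) (psi_row f).
Proof.
move=> f_aut [g_in _ _ _ _]; apply/row_matrixP => i.
rewrite row_psi_row row_tmulmx row_psi_row /= (aut_row_tmulmx f_aut) //.
exact/g_in/row_rowspace.
Qed.

Lemma psi_row_Hrel f : is_aut (rowspace E) f -> Hrel (psi_row f) E.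
Proof.
move=> f_aut; rewrite psi_row_tr -[X in Hrel _ X]trmxK; apply: Hrel_tr.
apply: (psi_Hrel n_gt0 ET_idem); exact: aut_row_trconj.
Qed.

Lemma psi_row_surj H : Hrel H E -> exists f, is_aut (rowspace E) f /\ psi_row f = H.
Proof.
move/Hrel_tr/(psi_surj n_gt0 ET_idem) => [g [g_aut psi_g]].
exists (trconj g); split; first by apply: aut_trconj g_aut => x; apply: rowspace_tr.
by apply/matrixP => i j; rewrite -[H]trmxK -psi_g !mxE /trconj tr_row.
Qed.

Definition phi_row f := Hinv E (psi_row f).

Lemma eq_phi_row f g : (forall x, rowspace E x -> f x = g x) -> phi_row f = phi_row g.
Proof.
move=> fg; congr Hinv; apply/row_matrixP => i.
by rewrite !row_psi_row fg //; apply: row_rowspace.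
Qed.

Lemma phi_row_Hrel f : is_aut (rowspace E) f -> Hrel (phi_row f) E.
Proof. by move=> f_aut; have [] := HinvP n_gt0 E_idem (psi_row_Hrel f_aut). Qed.

Lemma phi_row_comp f g : is_aut (rowspace E) f -> is_aut (rowspace E) g ->
  phi_row (f \o g) = tmul (phi_row f) (phi_row g).
Proof.
move=> f_aut g_aut; rewrite /phi_row psi_row_comp //.
by rewrite Hinv_mul //; apply: psi_row_Hrel.
Qed.

Lemma phi_row_inj f g : is_aut (rowspace E) f -> is_aut (rowspace E) g ->
  phi_row f = phi_row g -> forall x, rowspace E x -> f x = g x.
Proof.
move=> f_aut g_aut phi_fg x x_in.
have psi_fg : psi_row f = psi_row g.
  rewrite -(HinvK n_gt0 E_idem (psi_row_Hrel f_aut)) -/(phi_row f) phi_fg.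
  by rewrite HinvK //; apply: psi_row_Hrel.
by rewrite (aut_row_tmulmx f_aut) ?(aut_row_tmulmx g_aut) ?psi_fg.
Qed.

Lemma phi_row_surj H : Hrel H E -> exists f, is_aut (rowspace E) f /\ phi_row f = H.
Proof.
move=> H_E; have [Hi_E _ _] := HinvP n_gt0 E_idem H_E.
have [f [f_aut psi_f]] := psi_row_surj Hi_E.
by exists f; split; rewrite // /phi_row psi_f HinvK.
Qed.

End RowSpace.

Theorem theorem3p4 (R : realType) (n : nat) (E : 'M[R]_n) :
  tmul E E = E ->
  ((forall f, is_aut (colspace E) f -> Hrel (psi E f) E) /\
   (forall f g, is_aut (colspace E) f -> is_aut (colspace E) g ->
      psi E (f \o g) = tmul (psi E f) (psi E g)) /\
   (forall f g, is_aut (colspace E) f -> is_aut (colspace E) g ->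
      psi E f = psi E g -> forall x, colspace E x -> f x = g x) /\
   (forall H, Hrel H E -> exists f, is_aut (colspace E) f /\ psi E f = H)) /\
  (exists phi : ('rV[R]_n -> 'rV[R]_n) -> 'M[R]_n,
     (forall f g, is_aut (rowspace E) f -> is_aut (rowspace E) g ->
        (forall x, rowspace E x -> f x = g x) -> phi f = phi g) /\
     (forall f, is_aut (rowspace E) f -> Hrel (phi f) E) /\
     (forall f g, is_aut (rowspace E) f -> is_aut (rowspace E) g ->
        phi (f \o g) = tmul (phi f) (phi g)) /\
     (forall f g, is_aut (rowspace E) f -> is_aut (rowspace E) g ->
        phi f = phi g -> forall x, rowspace E x -> f x = g x) /\
     (forall H, Hrel H E -> exists f, is_aut (rowspace E) f /\ phi f = H)).
Proof.
move=> E_idem; have [n0 | n_gt0] := posnP n.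
  (* For n = 0 all matrices coincide and R(E) is empty. *)
  subst n; have mx0 m (A B : 'M[R]_(0, m)) : A = B by rewrite (flatmx0 A) (flatmx0 B).
  have id_aut a b (M : 'M[R]_(a, b) -> Prop) : is_aut M id by split=> // y My; exists y.
  have no_row x : ~ rowspace E x by case=> S [_ [/set0Pn[[]]] //].
  split; last exists (fun _ => E); repeat split=> *;
    solve [exact: mx0 | left; exact: mx0 | by exists id; split; [exact: id_aut | exact: mx0]
          | by exfalso; apply: no_row; eassumption].
split.
  split; first exact: psi_Hrel.
  split; first exact: psi_comp.
  by split; [exact: psi_inj | exact: psi_surj].
exists (phi_row E); split; first by move=> f g _ _; apply: eq_phi_row.
split; first exact: phi_row_Hrel.
split; first exact: phi_row_comp.
by split; [exact: phi_row_inj | exact: phi_row_surj].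
Qed.
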